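(* Suppose the collective choice problem $\mathcal C$ satisfies Thin Individual Indifference. The following holds if and only if $\mathcal C$ is Manipulable: for every $\delta>0$ there exist $\epsilon_\delta>0$ and $T_\delta\in\mathbb N$ such that, whenever the policy space is restricted to any generic $\epsilon$-grid $X_\epsilon$ with $\epsilon<\epsilon_\delta$ and the amendment procedure has at least $T_\delta$ rounds, then for any initial default in $X_\epsilon$ the agenda setter's payoff is at least $u_A^*-\delta$ in every equilibrium.
   Context: Collective choice problem $\mathcal C$: voters $N=\{1,\dots,n\}$ ($n$ odd) and a non-voting agenda setter $A$ choose from a compact metrizable policy space $X$ with metric $d$; each player $i\in N\cup\{A\}$ has a complete, transitive, continuous preference $\succsim_i$ with continuous utility $u_i$. $x\succ_M y$ means a strict majority of voters strictly prefer $x$ to $y$. $X_A^*=\arg\max_X u_A$, $u_A^*=\max_{x\in X}u_A(x)$. $x$ is Improvable if some $y$ has $y\succ_A x$ and $y\succ_M x$; $\mathcal C$ is Manipulable if every $x\notin X_A^*$ is Improvable. For $i$ and $x$, $I_i(x)=\{y\in X: y\sim_i x\}$; $\mathcal C$ satisfies Thin Individual Indifference if $I_i(x)\setminus\{x\}$ has empty interior for every player $i$ and $x\in X$. For $A\subseteq X$, $d(x,A)=\inf_{y\in A}d(x,y)$. A generic $\epsilon$-grid is a finite set $X_\epsilon\subseteq X$ with $\max_{x\in X}d(x,X_\epsilon)<\epsilon$ on which all players' preferences are antisymmetric. Restricting the policy space to $X_\epsilon$ means all proposals and defaults lie in $X_\epsilon$ and preferences are the restrictions. Amendment procedure with $T$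 rounds: initial default $x^0$; in each round the agenda setter proposes a policy voted against the current default by simple majority; if it passes it becomes the new default, otherwise the default is unchanged; the final default is implemented. Strategies may depend on full histories and may be mixed. Equilibrium: subgame perfect equilibrium with as-if-pivotal voting (at histories where passage leads to continuation outcome $x$ and rejection to $y$ regardless of the composition of the vote, any voter with a strict preference between $x$ and $y$ votes for the option leading to her preferred outcome). *)

From Stdlib Require Import Rdefinitions.
From HB Require Import structures.
From mathcomp Require Import all_boot all_order all_algebra.
From mathcomp Require Import Rstruct.

Set Implicit Arguments.
Unset Strict Implicit.
Unset Printing Implicit Defensive.

Import Order.TTheory GRing.Theory Num.Theory.
Local Open Scope ring_scope.

Definition is_metric (X : Type) (d : X -> X -> R) : Prop :=
  [/\ (forall x y, 0 <= d x y),
      (forall x y, d x y = 0 <-> x = y),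
      (forall x y, d x y = d y x) &
      (forall x y z, d x z <= d x y + d y z)].

Definition dopen (X : Type) (d : X -> X -> R) (U : X -> Prop) : Prop :=
  forall x, U x -> exists r, 0 < r /\ forall y, d x y < r -> U y.

Definition dcompact (X : Type) (d : X -> X -> R) : Prop :=
  forall (I : Type) (U : I -> X -> Prop),
    (forall i, dopen d (U i)) -> (forall x, exists i, U i x) ->
    exists s : list I, forall x, exists i, List.In i s /\ U i x.

Definition dcontinuous (X : Type) (d : X -> X -> R) (f : X -> R) : Prop :=
  forall x e, 0 < e -> exists r, 0 < r /\ forall y, d x y < r -> `|f y - f x| < e.

(* players: Some i = voter i (i < n), None = the agenda setter A *)
Definition player (n : nat) := option 'I_n.

(* utility of a player (x ≿_p y  iff  util p x >= util p y) *)
Definition util (X : Type) (n : nat) (u : 'I_n -> X -> R) (uA : X -> R)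
  (p : player n) (x : X) : R :=
  match p with None => uA x | Some i => u i x end.

Definition maj_pref (X : Type) (n : nat) (u : 'I_n -> X -> R) (x y : X) : bool :=
  (n < 2 * #|[set i : 'I_n | (u i y < u i x)%R]|)%N.

Definition in_XAstar (X : Type) (uA : X -> R) (x : X) : Prop :=
  forall y, uA y <= uA x.

Definition improvable (X : Type) (n : nat) (u : 'I_n -> X -> R) (uA : X -> R)
  (x : X) : Prop :=
  exists y, uA x < uA y /\ maj_pref u y x.

Definition manipulable (X : Type) (n : nat) (u : 'I_n -> X -> R) (uA : X -> R)
  : Prop :=
  forall x, ~ in_XAstar uA x -> improvable u uA x.

(* Thin Individual Indifference: I_p(x) \ {x} has empty interior
   (no open ball of positive radius is contained in it). *)
Definition thin_indifference (X : Type) (d : X -> X -> R) (n : nat)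
  (u : 'I_n -> X -> R) (uA : X -> R) : Prop :=
  forall (p : player n) (x : X),
    ~ (exists y r, 0 < r /\
         forall z, d y z < r -> util u uA p z = util u uA p x /\ z <> x).

(* A generic eps-grid, given as an enumeration g : 'I_m -> X of its
   points: finite set, max_x d(x, X_eps) < eps, all players' preferences
   antisymmetric on X_eps. *)
Definition generic_grid (X : Type) (d : X -> X -> R) (n : nat)
  (u : 'I_n -> X -> R) (uA : X -> R) (eps : R) (m : nat) (g : 'I_m -> X)
  : Prop :=
  [/\ injective g,
      (exists r, r < eps /\ forall x, exists j, d x (g j) <= r) &
      (forall (p : player n) (j k : 'I_m),
          util u uA p (g j) = util u uA p (g k) -> g j = g k)].

(* The amendment procedure on the grid 'I_m (policy g j for index j)   *)

(* one round: the proposal and the full vote profile (true = yes) *)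
Definition round (m n : nat) := ('I_m * {ffun 'I_n -> bool})%type.
Definition history (m n : nat) := seq (round m n).

Definition passes (n : nat) (v : {ffun 'I_n -> bool}) : bool :=
  (n < 2 * #|[set i | v i]|)%N.

Definition cur_default (m n : nat) (x0 : 'I_m) (h : history m n) : 'I_m :=
  foldl (fun x r => if passes r.2 then r.1 else x) x0 h.

(* behaviour-strategy profile (mixed strategies, history dependent):
   propose h y  = probability A proposes y at history h;
   vote i h y   = probability voter i votes for proposal y at (h, y). *)
Record profile (m n : nat) := Profile {
  propose : history m n -> 'I_m -> R ;
  vote    : 'I_n -> history m n -> 'I_m -> R }.

Definition valid_profile (m n : nat) (s : profile m n) : Prop :=
  [/\ (forall h y, 0 <= propose s h y),
      (forall h, \sum_(y : 'I_m) propose s h y = 1) &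
      (forall i h y, 0 <= vote s i h y <= 1)].

Definition vote_prob (m n : nat) (s : profile m n) (h : history m n) (y : 'I_m)
  (v : {ffun 'I_n -> bool}) : R :=
  \prod_(i : 'I_n) (if v i then vote s i h y else 1 - vote s i h y).

(* expected value of f(final default) from the start of a round at
   history h with k rounds remaining *)
Fixpoint cont (m n : nat) (s : profile m n) (f : 'I_m -> R) (x0 : 'I_m)
  (k : nat) (h : history m n) : R :=
  match k with
  | 0 => f (cur_default x0 h)
  | k'.+1 =>
      \sum_(y : 'I_m) propose s h y *
        \sum_(v : {ffun 'I_n -> bool})
            vote_prob s h y v * cont s f x0 k' (rcons h (y, v))
  end.

(* expected value of f(final default) from the voting node (h, y),
   with k rounds remaining after the current one *)
Definition vcont (m n : nat) (s : profile m n) (f : 'I_m -> R) (x0 : 'I_m)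
  (k : nat) (h : history m n) (y : 'I_m) : R :=
  \sum_(v : {ffun 'I_n -> bool}) vote_prob s h y v * cont s f x0 k (rcons h (y, v)).

Definition unilateral (m n : nat) (p : player n) (s s' : profile m n) : Prop :=
  match p with
  | None => forall i h y, vote s' i h y = vote s i h y
  | Some i => (forall h y, propose s' h y = propose s h y) /\
              (forall j h y, j <> i -> vote s' j h y = vote s j h y)
  end.

(* subgame perfection in the T-round amendment game with policies g,
   initial default x0: no profitable unilateral deviation in any subgame
   (subgames start at proposal nodes h and at voting nodes (h, y)) *)
Definition subgame_perfect (X : Type) (n : nat) (u : 'I_n -> X -> R)
  (uA : X -> R) (m : nat) (g : 'I_m -> X) (T : nat) (x0 : 'I_m)
  (s : profile m n) : Prop :=
  valid_profile s /\
  forall (p : player n) (s' : profile m n),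
    valid_profile s' -> unilateral p s s' ->
    (forall h : history m n, (size h < T)%N ->
       cont s' (fun j => util u uA p (g j)) x0 (T - size h) h
       <= cont s (fun j => util u uA p (g j)) x0 (T - size h) h) /\
    (forall (h : history m n) (y : 'I_m), (size h < T)%N ->
       vcont s' (fun j => util u uA p (g j)) x0 (T - size h).-1 h y
       <= vcont s (fun j => util u uA p (g j)) x0 (T - size h).-1 h y).

(* As-if-pivotal voting: at a voting node (h, y) where every passing vote
   profile leads (with certainty) to final outcome x and every failing one
   leads (with certainty) to final outcome z, every voter with a strict
   preference between x and z votes for the option leading to her
   preferred outcome. *)
Definition as_if_pivotal (X : Type) (n : nat) (u : 'I_n -> X -> R)
  (m : nat) (g : 'I_m -> X) (T : nat) (x0 : 'I_m) (s : profile m n) : Prop :=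
  forall (h : history m n) (y : 'I_m), (size h < T)%N ->
  forall x z : 'I_m,
    (forall v, passes v -> forall w : 'I_m,
        cont s (fun j => (j == w)%:R) x0 (T - size h).-1 (rcons h (y, v))
        = (w == x)%:R) ->
    (forall v, ~~ passes v -> forall w : 'I_m,
        cont s (fun j => (j == w)%:R) x0 (T - size h).-1 (rcons h (y, v))
        = (w == z)%:R) ->
    forall i : 'I_n,
      (u i (g z) < u i (g x) -> vote s i h y = 1) /\
      (u i (g x) < u i (g z) -> vote s i h y = 0).

Definition equilibrium (X : Type) (n : nat) (u : 'I_n -> X -> R) (uA : X -> R)
  (m : nat) (g : 'I_m -> X) (T : nat) (x0 : 'I_m) (s : profile m n) : Prop :=
  subgame_perfect u uA g T x0 s /\ as_if_pivotal u g T x0 s.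

Definition setter_payoff (X : Type) (n : nat) (uA : X -> R) (m : nat)
  (g : 'I_m -> X) (T : nat) (x0 : 'I_m) (s : profile m n) : R :=
  cont s (fun j => uA (g j)) x0 T [::].

(* On a generic grid the amendment game is solved by backward induction.  Let
   b(x) be the setter's favourite among x and the policies beating x by
   majority.  With k rounds left and default x, every equilibrium yields b^k(x):
   as-if-pivotal voters compare the two induced outcomes sincerely, and
   proposing b(x) is then optimal for the setter and, by genericity, only
   proposals leading to b^{k+1}(x) are made.  Setter proposing b(default) with
   sincere voting is such an equilibrium.

   If the problem is manipulable, compactness yields e > 0 such that on every
   fine enough grid b raises u_A by at least e at each policy delta-away from
   u_A^*; since u_A is bounded below, a bounded number of rounds suffices.
   Conversely, a non-optimal unimprovable x is a fixed point of b; Thin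
   Individual Indifference and a finite Baire argument place x on generic
   grids of any fineness, and starting there the setter only gets u_A(x). *)

From Stdlib Require Import Rdefinitions Classical.
From Stdlib Require List.
From HB Require Import structures.
From mathcomp Require Import all_boot all_order all_algebra.
From mathcomp Require Import Rstruct lra.
Import Order.TTheory GRing.Theory Num.Theory.
Local Open Scope ring_scope.

Set Implicit Arguments.
Unset Strict Implicit.
Unset Printing Implicit Defensive.

Section WeightedSums.
Variables (K : numDomainType) (I : finType).
Implicit Types (w F : I -> K) (c : K).

Lemma sumr_supp_const w F c :
  (forall i, w i != 0 -> F i = c) -> \sum_i w i * F i = c * \sum_i w i.
Proof.
move=> Fc; rewrite mulr_sumr; apply: eq_bigr => i _.
by have [->|/Fc ->] := eqVneq (w i) 0; rewrite ?mulr0 ?mul0r // mulrC.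
Qed.

Lemma sumr_supp_le w F c :
  (forall i, 0 <= w i) -> (forall i, w i != 0 -> F i <= c) ->
  \sum_i w i * F i <= c * \sum_i w i.
Proof.
move=> w_ge0 Fc; rewrite mulr_sumr; apply: ler_sum => i _.
have [->|/Fc Fic] := eqVneq (w i) 0; first by rewrite mulr0 mul0r.
by rewrite mulrC ler_wpM2r.
Qed.

Lemma sumr_supp_eq_max w F c :
  (forall i, 0 <= w i) -> (forall i, F i <= c) ->
  c * \sum_i w i <= \sum_i w i * F i -> forall i, w i != 0 -> F i = c.
Proof.
move=> w_ge0 Fc avg_ge i wi0.
have gap_ge0 j : 0 <= w j * (c - F j) by rewrite mulr_ge0 ?subr_ge0.
have gap0 : \sum_j w j * (c - F j) = 0.
  apply/eqP; rewrite eq_le sumr_ge0 // andbT.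
  under eq_bigr do rewrite mulrBr.
  by rewrite sumrB -mulr_suml mulrC subr_le0.
have /eqP := @psumr_eq0P _ _ predT _ (fun j _ => gap_ge0 j) gap0 i isT.
by rewrite mulf_eq0 (negbTE wi0) subr_eq0 => /eqP.
Qed.

Lemma sum_delta_mul (a : I) F : \sum_i (i == a)%:R * F i = F a.
Proof.
rewrite (bigD1 a) //= eqxx mul1r big1 ?addr0 // => i /negbTE ->.
by rewrite mul0r.
Qed.

Lemma sum_delta (a : I) : \sum_i ((i == a)%:R : K) = 1.
Proof. by rewrite (bigD1 a) //= eqxx big1 ?addr0 // => i /negbTE ->. Qed.

End WeightedSums.

Section Votes.
Variables (m n : nat).
Implicit Types (s : profile m n) (h : history m n) (y : 'I_m).
Implicit Types (v w : {ffun 'I_n -> bool}).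

Lemma sum_vote_prob s h y : \sum_v vote_prob s h y v = 1.
Proof.
rewrite /vote_prob -(bigA_distr_bigA (fun i (b : bool) =>
  if b then vote s i h y else 1 - vote s i h y)).
by rewrite big1 // => i _; rewrite big_bool /= addrC subrK.
Qed.

Lemma vote_prob_ge0 s h y v :
  (forall i, 0 <= vote s i h y <= 1) -> 0 <= vote_prob s h y v.
Proof.
move=> vote01; apply: prodr_ge0 => i _.
by have /andP[? ?] := vote01 i; case: (v i); rewrite ?subr_ge0.
Qed.

Lemma vote_prob_supp s h y v i (b : bool) :
  vote s i h y = b%:R -> vote_prob s h y v != 0 -> v i = b.
Proof.
move=> vi_pure; apply: contraNeq => vib; apply/prodf_eq0; exists i => //.
by rewrite vi_pure; case: (v i) b {vi_pure} vib => -[]; rewrite ?subrr.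
Qed.

Lemma passes_mono v w : (forall i, v i -> w i) -> passes v -> passes w.
Proof.
move=> vw /leq_trans; apply; rewrite leq_mul2l /=.
by apply: subset_leq_card; apply/subsetP => i; rewrite !inE; apply: vw.
Qed.

Lemma passes_all : (0 < n)%N -> passes ([ffun=> true] : {ffun 'I_n -> bool}).
Proof.
move=> n_gt0; rewrite /passes (_ : [set i | _] = setT); last first.
  by apply/setP => i; rewrite !inE ffunE.
by rewrite cardsT card_ord mul2n -addnn -[X in (X < _)%N]add0n ltn_add2r.
Qed.

Lemma passes_none : ~~ passes ([ffun=> false] : {ffun 'I_n -> bool}).
Proof.
rewrite /passes (_ : [set i | _] = set0) ?cards0 //.
by apply/setP => i; rewrite !inE ffunE.
Qed.

Lemma sincere_vote_dominant v w i (a b : R) :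
  (forall j, j != i -> v j = w j) -> w i = (b < a) ->
  (if passes v then a else b) <= (if passes w then a else b).
Proof.
move=> vw wi; have [vwi|] := eqVneq (v i) (w i).
  suff -> : v = w by [].
  by apply/ffunP => j; have [->//|/vw] := eqVneq j i.
rewrite wi; case: (ltP b a) => ab vi.
- have : passes v -> passes w.
    by apply: passes_mono => j; have [->|/vw ->//] := eqVneq j i; rewrite wi ab.
  by case: (passes v); case: (passes w) => //; [move/(_ isT) | rewrite ltW].
- have : passes w -> passes v.
    apply: passes_mono => j; have [->|/vw ->//] := eqVneq j i.
    by rewrite wi ltNge ab; move: vi; case: (v i).
  by case: (passes v); case: (passes w) => // /(_ isT).
Qed.

End Votes.

Section AmendmentGame.
Variables (X : Type) (n m : nat) (u : 'I_n -> X -> R) (uA : X -> R).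
Variable g : 'I_m -> X.
Hypothesis util_inj : forall (p : player n) (j k : 'I_m),
  util u uA p (g j) = util u uA p (g k) -> j = k.

Definition beats (y x : 'I_m) : bool := maj_pref u (g y) (g x).

Definition best_amendment (x : 'I_m) : 'I_m :=
  [arg max_(j > x | (j == x) || beats j x) uA (g j)]%O.

Lemma best_amendmentP x :
  ((best_amendment x == x) || beats (best_amendment x) x) /\
  forall y, (y == x) || beats y x -> uA (g y) <= uA (g (best_amendment x)).
Proof. by rewrite /best_amendment; case: arg_maxP; rewrite ?eqxx. Qed.

Lemma best_amendment_unimprovable x :
  ~ improvable u uA (g x) -> best_amendment x = x.
Proof.
move=> unimprovable; have [//|best_x] := eqVneq (best_amendment x) x.
have [/orP[/eqP//|best_beats] best_max] := best_amendmentP x.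
case: unimprovable; exists (g (best_amendment x)); split=> //.
rewrite lt_neqAle best_max ?eqxx // andbT.
by apply: contra_neq best_x => /(@util_inj None).
Qed.

Definition outcome (k : nat) (x : 'I_m) : 'I_m := iter k best_amendment x.

Lemma outcome_unimprovable k x : ~ improvable u uA (g x) -> outcome k x = x.
Proof. by move/best_amendment_unimprovable; apply: iter_fix. Qed.

Definition vote_outcome k (z y : 'I_m) : 'I_m :=
  if beats (outcome k y) (outcome k z) then outcome k y else outcome k z.

Definition sincere_votes k (z y : 'I_m) : {ffun 'I_n -> bool} :=
  [ffun i => u i (g (outcome k z)) < u i (g (outcome k y))].

Lemma passes_sincere_votes k z y :
  passes (sincere_votes k z y) = beats (outcome k y) (outcome k z).
Proof.
rewrite /passes /beats /maj_pref; congr (_ < _ * #|pred_of_set _|)%N.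
by apply/setP => i; rewrite !inE ffunE.
Qed.

Lemma outcomeSr k x : outcome k.+1 x = outcome k (best_amendment x).
Proof. exact: iterSr. Qed.

Lemma vote_outcome_best k z : vote_outcome k z (best_amendment z) = outcome k.+1 z.
Proof.
rewrite /vote_outcome -outcomeSr [outcome k.+1 z]iterS -/(outcome k z).
by case: (best_amendmentP (outcome k z)) => /orP[/eqP->|->] _; rewrite ?if_same.
Qed.

Lemma vote_outcome_le k z y :
  uA (g (vote_outcome k z y)) <= uA (g (outcome k.+1 z)).
Proof.
rewrite [outcome k.+1 z]iterS; apply: (proj2 (best_amendmentP _)).
by rewrite /vote_outcome; case: ifP => [->|_]; rewrite ?orbT ?eqxx.
Qed.

Variables (T : nat) (x0 : 'I_m).
Implicit Types (s : profile m n) (h : history m n) (f : 'I_m -> R).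

Lemma cur_default_rcons h r :
  cur_default x0 (rcons h r) = if passes r.2 then r.1 else cur_default x0 h.
Proof. by rewrite /cur_default foldl_rcons. Qed.

Definition induces_outcome s k := forall h, (size h + k)%N = T ->
  forall f, cont s f x0 k h = f (outcome k (cur_default x0 h)).

Lemma rounds_left h k : (size h + k)%N = T -> (T - size h)%N = k.
Proof. by move=> <-; rewrite addnC addnK. Qed.

Lemma rounds_leftK h : (size h < T)%N -> (size h + (T - size h).-1.+1 = T)%N.
Proof. by move=> h_lt; rewrite prednK ?subn_gt0 // subnKC // ltnW. Qed.

Section NextRound.
Variables (s : profile m n) (k : nat) (h : history m n).
Hypothesis s_k : induces_outcome s k.
Hypothesis size_h : (size h + k.+1)%N = T.

Lemma cont_next_round f y v : cont s f x0 k (rcons h (y, v)) =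
  f (outcome k (if passes v then y else cur_default x0 h)).
Proof. by rewrite s_k ?cur_default_rcons // size_rcons addSnnS. Qed.

Lemma vcont_vote_outcome f y :
  (outcome k y != outcome k (cur_default x0 h) ->
     forall i, vote s i h y = (sincere_votes k (cur_default x0 h) y i)%:R) ->
  vcont s f x0 k h y = f (vote_outcome k (cur_default x0 h) y).
Proof.
move=> sincere; rewrite /vcont.
rewrite (sumr_supp_const (c := f (vote_outcome k (cur_default x0 h) y))).
  by rewrite sum_vote_prob mulr1.
move=> v v_supp; rewrite cont_next_round /vote_outcome (fun_if (outcome k)); congr f.
have [same|diff] := eqVneq (outcome k y) (outcome k (cur_default x0 h)).
  by rewrite same !if_same.
have -> : v = sincere_votes k (cur_default x0 h) y.
  by apply/ffunP => i; apply: vote_prob_supp (sincere diff i) v_supp.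
by rewrite passes_sincere_votes; case: ifP.
Qed.

End NextRound.

Lemma eq_cont_beyond s s' f N :
  (forall h, (N <= size h)%N ->
     propose s' h =1 propose s h /\ forall i, vote s' i h =1 vote s i h) ->
  forall k h, (N <= size h)%N -> cont s' f x0 k h = cont s f x0 k h.
Proof.
move=> same; elim=> [//|k IH] h Nh /=; have [samep samev] := same h Nh.
apply: eq_bigr => y _; rewrite samep; congr (_ * _); apply: eq_bigr => v _.
rewrite IH ?size_rcons 1?leqW //; congr (_ * _).
by apply: eq_bigr => i _; rewrite samev.
Qed.

Lemma contS s f k h :
  cont s f x0 k.+1 h = \sum_y propose s h y * vcont s f x0 k h y.
Proof. by []. Qed.

Definition propose_only s h0 y0 : profile m n :=
  Profile (fun h y => if h == h0 then (y == y0)%:R else propose s h y) (vote s).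

Lemma valid_propose_only s h0 y0 :
  valid_profile s -> valid_profile (propose_only s h0 y0).
Proof.
by case=> p_ge0 p_sum v01; split=> //= [h y|h]; case: eqP => _ //; apply: sum_delta.
Qed.

Lemma cont_propose_only s f k h0 y0 :
  cont (propose_only s h0 y0) f x0 k.+1 h0 = vcont s f x0 k h0 y0.
Proof.
rewrite /= eqxx (eq_bigr (fun y => (y == y0)%:R * vcont s f x0 k h0 y)).
  by rewrite sum_delta_mul.
move=> y _; congr (_ * _); apply: eq_bigr => v _; congr (_ * _).
apply: (@eq_cont_beyond _ _ _ (size h0).+1); last by rewrite size_rcons.
move=> h h0h /=; have -> : (h == h0) = false.
  by apply: contraTF h0h => /eqP->; rewrite ltnn.
by split.
Qed.

Section Equilibrium.
Variable s : profile m n.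
Hypothesis s_eq : equilibrium u uA g T x0 s.

Lemma equilibrium_votes_sincere k h y :
  induces_outcome s k -> (size h + k.+1)%N = T ->
  outcome k y != outcome k (cur_default x0 h) ->
  forall i, vote s i h y = (sincere_votes k (cur_default x0 h) y i)%:R.
Proof.
move=> s_k size_h diff i; set z := cur_default x0 h.
have h_lt : (size h < T)%N by rewrite -size_h -addSnnS leq_addr.
have pass_out v : passes v -> forall w,
    cont s (fun j => (j == w)%:R) x0 k (rcons h (y, v)) = (w == outcome k y)%:R.
  by move=> + w; rewrite cont_next_round /=; case: (passes v) => // _; rewrite eq_sym.
have fail_out v : ~~ passes v -> forall w,
    cont s (fun j => (j == w)%:R) x0 k (rcons h (y, v)) = (w == outcome k z)%:R.
  by move=> + w; rewrite cont_next_round /=; case: (passes v) => // _; rewrite eq_sym.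
have := s_eq.2 h y h_lt (outcome k y) (outcome k z).
rewrite (rounds_left size_h) => /(_ pass_out fail_out i) [sincere_yes sincere_no].
rewrite /sincere_votes ffunE.
case: ltgtP => [/sincere_yes|/sincere_no|/(@util_inj (Some i)) zy] //.
by rewrite zy eqxx in diff.
Qed.

Lemma equilibrium_proposal_supp k h y :
  induces_outcome s k -> (size h + k.+1)%N = T -> propose s h y != 0 ->
  vote_outcome k (cur_default x0 h) y = outcome k.+1 (cur_default x0 h).
Proof.
move=> s_k size_h y_supp; set z := cur_default x0 h.
have h_lt : (size h < T)%N by rewrite -size_h -addSnnS leq_addr.
have vcontE f y' : vcont s f x0 k h y' = f (vote_outcome k z y').
  exact/vcont_vote_outcome/equilibrium_votes_sincere.
have [[[p_ge0 p_sum _] spe] _] := s_eq.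
have deviation_valid := valid_propose_only h (best_amendment z) s_eq.1.1.
have := (spe None _ deviation_valid (fun _ _ _ => erefl)).1 h h_lt.
rewrite (rounds_left size_h) cont_propose_only vcontE vote_outcome_best contS.
under eq_bigr do rewrite vcontE.
rewrite -[X in X <= _]mulr1 -(p_sum h).
move=> /(sumr_supp_eq_max (p_ge0 h) (vote_outcome_le k z)) /(_ y y_supp).
exact: (@util_inj None).
Qed.

Lemma equilibrium_induces_outcome k : (k <= T)%N -> induces_outcome s k.
Proof.
elim: k => [_ h _ f //|k IH kT h size_h f]; have {}IH := IH (ltnW kT).
have [[[p_ge0 p_sum _] _] _] := s_eq; set z := cur_default x0 h.
rewrite contS (sumr_supp_const (c := f (outcome k.+1 z))) ?p_sum ?mulr1 //.
move=> y y_supp; rewrite (vcont_vote_outcome IH size_h).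
  by rewrite equilibrium_proposal_supp.
exact: equilibrium_votes_sincere.
Qed.

Lemma equilibrium_payoff : setter_payoff uA g T x0 s = uA (g (outcome T x0)).
Proof. exact: (equilibrium_induces_outcome (leqnn T) (h := [::])). Qed.

End Equilibrium.

Lemma unilateral_vote p s s' j h y :
  unilateral p s s' -> p != Some j -> vote s' j h y = vote s j h y.
Proof.
case: p => [i [_ others]|others] // ij; apply: others => ji.
by rewrite ji eqxx in ij.
Qed.

Definition sincere_profile : profile m n := Profile
  (fun h y => (y == best_amendment (cur_default x0 h))%:R)
  (fun i h y => (sincere_votes (T - size h).-1 (cur_default x0 h) y i)%:R).

Lemma valid_sincere_profile : valid_profile sincere_profile.
Proof.
split=> /= [h y|h|i h y]; [exact: ler0n | exact: sum_delta |].
by case: (sincere_votes _ _ _ _); rewrite ?ler01 ?lexx.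
Qed.

Lemma sincere_profile_vote k h y i : (size h + k.+1)%N = T ->
  vote sincere_profile i h y = (sincere_votes k (cur_default x0 h) y i)%:R.
Proof. by move=> /rounds_left /= ->. Qed.

Lemma sincere_profile_induces_outcome k : induces_outcome sincere_profile k.
Proof.
elim: k => [h _ f //|k IH] h size_h f; set z := cur_default x0 h.
rewrite contS (eq_bigr (fun y => (y == best_amendment z)%:R * f (vote_outcome k z y))).
  by rewrite sum_delta_mul vote_outcome_best.
move=> y _; congr (_ * _); apply: vcont_vote_outcome => // _ i.
exact: sincere_profile_vote.
Qed.

Lemma vote_outcome_sincere_ge (p : player n) k z y (v : {ffun 'I_n -> bool}) :
  (forall j, p != Some j -> v j = sincere_votes k z y j) ->
  util u uA p (g (outcome k (if passes v then y else z))) <=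
  util u uA p (g (vote_outcome k z y)).
Proof.
rewrite /vote_outcome -passes_sincere_votes; case: p => [i|] /= v_sincere.
  have others j : j != i -> v j = sincere_votes k z y j.
    by move=> ji; apply: v_sincere; apply: contra ji => /eqP[->].
  have := sincere_vote_dominant
    (a := u i (g (outcome k y))) (b := u i (g (outcome k z))) others.
  by rewrite ffunE => /(_ erefl); case: (passes v); case: (passes _).
suff -> : v = sincere_votes k z y by case: (passes _).
by apply/ffunP => j; apply: v_sincere.
Qed.

Section Deviations.
Variables (p : player n) (s' : profile m n).
Hypotheses (s'_valid : valid_profile s') (s'_unil : unilateral p sincere_profile s').
Let F j := util u uA p (g j).

Lemma sincere_vote_node_ge k h y :
  (forall h', (size h' + k)%N = T ->
     cont s' F x0 k h' <= cont sincere_profile F x0 k h') ->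
  (size h + k.+1)%N = T ->
  vcont s' F x0 k h y <= vcont sincere_profile F x0 k h y.
Proof.
move=> IH size_h; have [_ _ v01] := s'_valid; set z := cur_default x0 h.
have sincere_k := @sincere_profile_induces_outcome k.
rewrite (vcont_vote_outcome sincere_k size_h); last first.
  by move=> _ i; apply: sincere_profile_vote.
apply: (@le_trans _ _
  (\sum_v vote_prob s' h y v * F (outcome k (if passes v then y else z)))).
  apply: ler_sum => v _; rewrite ler_wpM2l ?vote_prob_ge0 //.
  by rewrite -(cont_next_round sincere_k size_h); apply: IH; rewrite size_rcons addSnnS.
rewrite -[X in _ <= X]mulr1 -(sum_vote_prob s' h y).
apply: sumr_supp_le => [v|v v_supp]; first exact: vote_prob_ge0.
apply: vote_outcome_sincere_ge => j pj; apply: vote_prob_supp v_supp.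
by rewrite (unilateral_vote h y s'_unil pj) (sincere_profile_vote _ _ size_h).
Qed.

Lemma sincere_proposal_node_ge k h : (size h + k)%N = T ->
  cont s' F x0 k h <= cont sincere_profile F x0 k h.
Proof.
elim: k h => [//|k IH] h size_h; have [p_ge0 p_sum _] := s'_valid.
set z := cur_default x0 h; rewrite [cont s' _ _ _ _]contS.
apply: (@le_trans _ _ (\sum_y propose s' h y * vcont sincere_profile F x0 k h y)).
  apply: ler_sum => y _; rewrite ler_wpM2l //.
  exact: sincere_vote_node_ge.
have vcontE y : vcont sincere_profile F x0 k h y = F (vote_outcome k z y).
  apply: (vcont_vote_outcome (@sincere_profile_induces_outcome k) size_h).
  by move=> _ j; apply: sincere_profile_vote.
under eq_bigr do rewrite vcontE.
rewrite (@sincere_profile_induces_outcome k.+1 h size_h).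
move: s'_unil; rewrite /F; case: p => [i [same_prop _]|_] /=.
  by under eq_bigr do rewrite same_prop; rewrite sum_delta_mul vote_outcome_best.
rewrite -[X in _ <= X]mulr1 -(p_sum h).
by apply: sumr_supp_le => // y _; apply: vote_outcome_le.
Qed.

End Deviations.

Lemma sincere_profile_subgame_perfect : subgame_perfect u uA g T x0 sincere_profile.
Proof.
split=> [|p s' s'_valid s'_unil]; first exact: valid_sincere_profile.
have prop_ge := sincere_proposal_node_ge s'_valid s'_unil.
split=> [h|h y] h_lt; first by apply: prop_ge; rewrite subnKC // ltnW.
apply: (sincere_vote_node_ge s'_valid s'_unil) => [h' /prop_ge //|].
exact: rounds_leftK.
Qed.

Lemma sincere_profile_as_if_pivotal :
  (0 < n)%N -> as_if_pivotal u g T x0 sincere_profile.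
Proof.
move=> n_gt0 h y h_lt x z pass_x fail_z i; set k := (T - size h).-1.
have size_h : (size h + k.+1)%N = T := rounds_leftK h_lt.
have next := cont_next_round (@sincere_profile_induces_outcome k) size_h.
have x_out : outcome k y = x.
  move: (pass_x _ (passes_all n_gt0) x); rewrite next /= (passes_all n_gt0) eqxx.
  by case: eqP => // _ /eqP; rewrite eq_sym oner_eq0.
have z_out : outcome k (cur_default x0 h) = z.
  move: (fail_z _ (@passes_none n) z); rewrite next /= (negbTE (@passes_none n)) eqxx.
  by case: eqP => // _ /eqP; rewrite eq_sym oner_eq0.
rewrite /= /sincere_votes ffunE -/k x_out z_out; split=> [->//|zx].
by rewrite ltNge ltW.
Qed.

Lemma sincere_profile_equilibrium :
  (0 < n)%N -> equilibrium u uA g T x0 sincere_profile.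
Proof.
split; [exact: sincere_profile_subgame_perfect | exact: sincere_profile_as_if_pivotal].
Qed.

End AmendmentGame.

Lemma mem_In (T : eqType) (x : T) (s : seq T) : x \in s -> List.In x s.
Proof. by elim: s => //= a s IH; rewrite in_cons => /orP[/eqP->|/IH]; [left|right]. Qed.

Lemma list_lower_bound (A : Type) (F : A -> R) (s : list A) :
  exists L, forall a, List.In a s -> L <= F a.
Proof.
elim: s => [|a s [L HL]]; first by exists 0.
by exists (Num.min (F a) L) => b [<-|/HL]; rewrite ge_min ?lexx // => ->; rewrite orbT.
Qed.

Lemma list_radius (A : Type) (P : A -> R -> Prop) (s : list A) :
  (forall a r r', 0 < r' -> r' <= r -> P a r -> P a r') ->
  (forall a, List.In a s -> exists2 r, 0 < r & P a r) ->
  exists2 r, 0 < r & forall a, List.In a s -> P a r.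
Proof.
move=> P_down; elim: s => [|a s IH] radii; first by exists 1.
have [ra ra_gt0 Pa] := radii a (or_introl erefl).
have [rs rs_gt0 Ps] := IH (fun b sb => radii b (or_intror sb)).
have r_gt0 : 0 < Num.min ra rs by rewrite lt_min ra_gt0 rs_gt0.
exists (Num.min ra rs) => // b [<-|sb].
  by apply: (P_down _ ra) Pa => //; rewrite ge_min lexx.
by apply: (P_down _ rs) (Ps b sb) => //; rewrite ge_min lexx orbT.
Qed.

Lemma fin_radius (I : finType) (P : I -> R -> Prop) :
  (forall a r r', 0 < r' -> r' <= r -> P a r -> P a r') ->
  (forall a, exists2 r, 0 < r & P a r) -> exists2 r, 0 < r & forall a, P a r.
Proof.
move=> P_down radii.
have [r r_gt0 Pr] := list_radius (s := enum I) P_down (fun a _ => radii a).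
by exists r => // a; apply/Pr/mem_In; rewrite mem_enum.
Qed.

Section Metric.
Variables (X : Type) (d : X -> X -> R).
Hypothesis d_metric : is_metric d.

Lemma d_self x : d x x = 0.
Proof. by case: d_metric => _ d0 _ _; apply/d0. Qed.

Lemma d_sym x y : d x y = d y x.
Proof. by case: d_metric. Qed.

Lemma d_tri x y z : d x z <= d x y + d y z.
Proof. by case: d_metric. Qed.

Lemma ball_open c r : dopen d (fun y => d c y < r).
Proof.
move=> x cx; exists (r - d c x); rewrite subr_gt0; split=> // y xy.
by have := d_tri c x y; lra.
Qed.

Lemma dcontinuous_lt_near f x a : dcontinuous d f -> f x < a ->
  exists2 r, 0 < r & forall y, d x y < r -> f y < a.
Proof.
move=> f_cont fx_lt.
have [|r [r_gt0 near]] := f_cont x (a - f x); first by rewrite subr_gt0.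
by exists r => // y /near; rewrite ltr_norml; lra.
Qed.

Lemma dcontinuous_gt_near f x a : dcontinuous d f -> a < f x ->
  exists2 r, 0 < r & forall y, d x y < r -> a < f y.
Proof.
move=> f_cont fx_gt.
have [|r [r_gt0 near]] := f_cont x (f x - a); first by rewrite subr_gt0.
by exists r => // y /near; rewrite ltr_norml; lra.
Qed.

Lemma dcontinuous_neq_open f a : dcontinuous d f -> dopen d (fun z => f z <> a).
Proof.
move=> f_cont z /eqP; rewrite neq_lt => /orP[lt|gt].
- have [r r_gt0 near] := dcontinuous_lt_near f_cont lt.
  by exists r; split=> // y /near; rewrite lt_neqAle => /andP[/eqP].
- have [r r_gt0 near] := dcontinuous_gt_near f_cont gt.
  by exists r; split=> // y /near; rewrite lt_neqAle => /andP[/eqP/nesym].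
Qed.

Hypothesis d_compact : dcompact d.

Lemma dcompact_lower_bound f : dcontinuous d f -> exists L, forall x, L <= f x.
Proof.
move=> f_cont; pose U c y := f c - 1 < f y.
have U_open c : dopen d (U c).
  move=> y /(dcontinuous_gt_near f_cont)[r r_gt0 near]; exists r; split=> //.
have [|cs cover] := d_compact U_open; first by move=> x; exists x; rewrite /U; lra.
have [L HL] := list_lower_bound (fun c => f c - 1) cs.
by exists L => x; have [c [/HL Lc]] := cover x; rewrite /U; lra.
Qed.

Lemma finite_net rho : 0 < rho ->
  exists cs : list X, forall x, exists c, List.In c cs /\ d c x < rho.
Proof.
move=> rho_gt0; have [|cs cover] := d_compact (fun c => @ball_open c rho).
  by move=> x; exists x; rewrite d_self.
by exists cs.
Qed.

End Metric.

Lemma generic_grid_util_inj (X : Type) (d : X -> X -> R) n (u : 'I_n -> X -> R) uA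
    eps m (g : 'I_m -> X) :
  generic_grid d u uA eps g ->
  forall p j k, util u uA p (g j) = util u uA p (g k) -> j = k.
Proof. by case=> g_inj _ g_gen p j k /g_gen /g_inj. Qed.

Section Improvement.
Variables (X : Type) (d : X -> X -> R) (n : nat) (u : 'I_n -> X -> R) (uA : X -> R).
Hypotheses (d_metric : is_metric d) (d_compact : dcompact d).
Hypotheses (u_cont : forall i, dcontinuous d (u i)) (uA_cont : dcontinuous d uA).

Lemma maj_pref_near x y : maj_pref u y x ->
  exists2 r, 0 < r & forall x' y', d x x' < r -> d y y' < r -> maj_pref u y' x'.
Proof.
move=> yx.
pose P i r :=
  forall x' y', d x x' < r -> d y y' < r -> u i x < u i y -> u i x' < u i y'.
have [i r r' _ r'r Pi x' y' xx' yy'|i|r r_gt0 Pr] := @fin_radius _ P.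
- by apply: Pi; apply: lt_le_trans r'r.
- have [lt|ge] := ltP (u i x) (u i y).
    2: by exists 1 => // x' y' _ _; rewrite ltNge ge.
  have x_mid : u i x < (u i x + u i y) / 2 by lra.
  have y_mid : (u i x + u i y) / 2 < u i y by lra.
  have [rx rx_gt0 near_x] := dcontinuous_lt_near (u_cont i) x_mid.
  have [ry ry_gt0 near_y] := dcontinuous_gt_near (u_cont i) y_mid.
  exists (Num.min rx ry); first by rewrite lt_min rx_gt0 ry_gt0.
  move=> x' y'; rewrite !lt_min => /andP[/near_x x'_lt _] /andP[_ /near_y y'_gt] _.
  exact: lt_trans x'_lt y'_gt.
- exists r => // x' y' xx' yy'; apply: leq_trans yx _; rewrite leq_mul2l /=.
  by apply: subset_leq_card; apply/subsetP => i; rewrite !inE; apply: Pr.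
Qed.

Definition improvement_witness x y r gap := 0 < r /\ 0 < gap /\
  forall x' y', d x x' < r -> d y y' < r -> maj_pref u y' x' /\ uA x' + gap <= uA y'.

Lemma improvement_witness_exists x y : uA x < uA y -> maj_pref u y x ->
  exists r gap, improvement_witness x y r gap.
Proof.
move=> Axy yx; have [rm rm_gt0 maj] := maj_pref_near yx.
pose gap := (uA y - uA x) / 2.
have x_up : uA x < uA x + gap / 2 by rewrite /gap; lra.
have y_down : uA y - gap / 2 < uA y by rewrite /gap; lra.
have [rx rx_gt0 near_x] := dcontinuous_lt_near uA_cont x_up.
have [ry ry_gt0 near_y] := dcontinuous_gt_near uA_cont y_down.
exists (Num.min rm (Num.min rx ry)), gap; split; first by rewrite !lt_min rm_gt0 rx_gt0.
split=> [|x' y']; first by rewrite /gap; lra.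
rewrite !lt_min => /and3P[xm /near_x xx _] /and3P[ym _ /near_y yy].
by split; [exact: maj | rewrite /gap in xx yy *; lra].
Qed.

Record improvement := Improvement {
  imp_from : X; imp_to : X; imp_radius : R; imp_gap : R;
  impP : improvement_witness imp_from imp_to imp_radius imp_gap }.

Variable xstar : X.
Hypothesis xstar_max : in_XAstar uA xstar.

Lemma uniform_improvement delta : 0 < delta -> manipulable u uA ->
  exists2 e, 0 < e & forall eps m (g : 'I_m -> X), eps < e ->
    generic_grid d u uA eps g -> forall w, uA (g w) <= uA xstar - delta ->
    uA (g w) + e <= uA (g (best_amendment u uA g w)).
Proof.
move=> delta_gt0 manip.
pose U (i : option improvement) z :=
  if i is Some c then d (imp_from c) z < imp_radius c else uA xstar - delta < uA z.
have U_open i : dopen d (U i).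
  case: i => [c|] /=; first exact: ball_open.
  by move=> z /(dcontinuous_gt_near uA_cont)[r r_gt0 near]; exists r.
have U_cover z : exists i, U i z.
  have [near_max|far] := ltP (uA xstar - delta) (uA z); first by exists None.
  have [z_max|y [Ayz yz]] := manip z; first by have := z_max xstar; lra.
  have [r [gap c]] := improvement_witness_exists Ayz yz.
  by exists (Some (Improvement c)); rewrite /U /= d_self //; case: c.
have [cs cover] := d_compact U_open U_cover.
pose P (i : option improvement) e :=
  if i is Some c then e <= imp_radius c /\ e <= imp_gap c else True.
have [[c|] r r' _ r'r //= [rr gr]|[c|] _|e e_gt0 Pe] := @list_radius _ P cs.
- by split; apply: le_trans r'r _.
- have [r_gt0 [gap_gt0 _]] := impP c.
  exists (Num.min (imp_radius c) (imp_gap c)); first by rewrite lt_min r_gt0.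
  by rewrite /P !ge_min !lexx orbT.
- by exists 1.
exists e => // eps m g eps_e [_ [r [r_eps near_grid]] _] w w_far.
have [[c|] [/Pe Pc Uw]] := cover (g w); last by rewrite /U in Uw; lra.
have [e_r e_gap] := Pc; have [_ [_ witness]] := impP c.
have [j jc] := near_grid (imp_to c).
have jc' : d (imp_to c) (g j) < imp_radius c by lra.
have [beats_w gap_j] := witness _ _ Uw jc'.
have := proj2 (best_amendmentP u uA g w) j; rewrite /beats beats_w orbT => /(_ isT).
lra.
Qed.

Lemma outcome_progress L e delta m (g : 'I_m -> X) :
  (forall x, L <= uA x) ->
  (forall w, uA (g w) <= uA xstar - delta ->
     uA (g w) + e <= uA (g (best_amendment u uA g w))) ->
  forall k w, uA xstar - delta < uA (g (outcome u uA g k w)) \/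
              L + k%:R * e <= uA (g (outcome u uA g k w)).
Proof.
move=> L_le improve; elim=> [w|k IH w]; first by right; rewrite mul0r addr0.
rewrite /outcome iterS -/(outcome u uA g k w); set w' := outcome u uA g k w.
have mono : uA (g w') <= uA (g (best_amendment u uA g w')).
  by apply: (proj2 (best_amendmentP u uA g w')); rewrite eqxx.
have [near_max|far] := ltP (uA xstar - delta) (uA (g w')).
  by left; apply: lt_le_trans mono.
have := improve _ far; rewrite -natr1 mulrDl mul1r.
by case: (IH w) => /=; rewrite -/w'; [lra | right; lra].
Qed.

Lemma manipulable_payoff_bound : manipulable u uA ->
  forall delta : R, 0 < delta ->
    exists eps0 : R, 0 < eps0 /\
    exists T0 : nat,
      forall (eps : R) (m : nat) (g : 'I_m -> X),
        eps < eps0 -> generic_grid d u uA eps g ->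
      forall T : nat, (T0 <= T)%N ->
      forall (x0 : 'I_m) (s : profile m n),
        equilibrium u uA g T x0 s ->
        uA xstar - delta <= setter_payoff uA g T x0 s.
Proof.
move=> manip delta delta_gt0.
have [e e_gt0 improve] := uniform_improvement delta_gt0 manip.
have [L L_le] := dcompact_lower_bound d_compact uA_cont.
have ratio_ge0 : 0 <= (uA xstar - L) / e.
  by rewrite divr_ge0 ?subr_ge0 ?L_le ?ltW.
exists e; split=> //; exists (Num.Def.archi_bound ((uA xstar - L) / e)).
move=> eps m g eps_e g_grid T T_large x0 s s_eq.
rewrite (equilibrium_payoff (generic_grid_util_inj g_grid) s_eq).
have [/ltW //|slow] := outcome_progress L_le (improve eps m g eps_e g_grid) T x0.
have : uA xstar - L < T%:R * e.
  rewrite -ltr_pdivrMr //; apply: lt_le_trans (archi_boundP ratio_ge0) _.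
  by rewrite ler_nat.
by have := xstar_max (g (outcome u uA g T x0)); lra.
Qed.

End Improvement.

Section GenericGrid.
Variables (X : Type) (d : X -> X -> R) (n : nat) (u : 'I_n -> X -> R) (uA : X -> R).
Hypotheses (d_metric : is_metric d) (d_compact : dcompact d).
Hypotheses (u_cont : forall i, dcontinuous d (u i)) (uA_cont : dcontinuous d uA).
Hypothesis thin : thin_indifference d u uA.

Lemma closed_cover_interior (K : eqType) (E : K -> X -> Prop) (ks : seq K) c rho :
  (forall k, dopen d (fun z => ~ E k z)) -> 0 < rho ->
  (forall z, d c z < rho -> exists2 k, k \in ks & E k z) ->
  exists k y r, 0 < r /\ forall z, d y z < r -> d c z < rho /\ E k z.
Proof.
move=> E_closed; elim: ks c rho => [|k ks IH] c rho rho_gt0 cover.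
  by have [] := cover c; rewrite ?d_self.
have [[z [cz not_Ek]]|all_Ek] := classic (exists z, d c z < rho /\ ~ E k z); last first.
  exists k, c, rho; split=> // z cz; split=> //.
  by apply: NNPP => not_Ek; apply: all_Ek; exists z.
have [r1 [r1_gt0 away]] := E_closed k z not_Ek.
pose r := Num.min r1 (rho - d c z).
have r_gt0 : 0 < r by rewrite lt_min r1_gt0 subr_gt0.
have inside z' : d z z' < r -> d c z' < rho.
  by rewrite lt_min => /andP[_]; have := d_tri d_metric c z z'; lra.
have [|k' [y [r' [r'_gt0 sub]]]] := IH z r r_gt0.
  move=> z' zz'; have [k''] := cover z' (inside z' zz').
  rewrite in_cons => /orP[/eqP-> Ek|]; last by exists k''.
  by move: zz'; rewrite lt_min => /andP[/away].
exists k', y, r'; split=> // z' /sub[zz' Ek']; split=> //; exact: inside.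
Qed.

Lemma generic_point_near m (q : 'I_m -> X) c rho : 0 < rho ->
  (exists j, d c (q j) < rho) \/
  exists2 z, d c z < rho & forall p j, util u uA p z <> util u uA p (q j).
Proof.
move=> rho_gt0; apply: NNPP => /not_or_and[no_grid no_generic].
pose E (pj : option 'I_n * 'I_m) z := util u uA pj.1 z = util u uA pj.1 (q pj.2).
have E_closed pj : dopen d (fun z => ~ E pj z).
  case: pj => [[i|] j]; first exact: dcontinuous_neq_open (u_cont i).
  exact: dcontinuous_neq_open uA_cont.
have cover z : d c z < rho -> exists2 pj, pj \in enum {: option 'I_n * 'I_m} & E pj z.
  move=> cz; apply: NNPP => none; apply: no_generic; exists z => // p j Epj.
  by apply: none; exists (p, j); rewrite ?mem_enum.
have [[p j] [y [r [r_gt0 sub]]]] := closed_cover_interior E_closed rho_gt0 cover.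
apply: (@thin p (q j)); exists y, r; split=> // z /sub[cz Ez]; split=> // zq.
by apply: no_grid; exists j; rewrite -zq.
Qed.

Lemma generic_enumeration xh rho (cs : list X) : 0 < rho ->
  exists m (q : 'I_m -> X) (j0 : 'I_m), [/\ q j0 = xh,
    forall p j k, util u uA p (q j) = util u uA p (q k) -> j = k &
    forall c, List.In c cs -> exists j, d c (q j) < rho].
Proof.
move=> rho_gt0; elim: cs => [|c cs [m [q [j0 [qj0 q_gen q_net]]]]].
  by exists 1%N, (fun=> xh), ord0; split=> // p j k _; rewrite !ord1.
have [[j cj]|[z cz z_gen]] := generic_point_near q c rho_gt0.
  by exists m, q, j0; split=> // c' [<-|/q_net]; first exists j.
pose q' (j : 'I_m.+1) := oapp q z (unlift ord_max j).
exists m.+1, q', (lift ord_max j0); split; first by rewrite /q' liftK.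
  move=> p j k; rewrite /q'.
  case: unliftP => [j' ->|->]; case: unliftP => [k' ->|->] //=.
  - by move/q_gen ->.
  - by move/esym/z_gen.
  - by move/z_gen.
move=> c' [<-|/q_net[j cj]]; first by exists ord_max; rewrite /q' unlift_none.
by exists (lift ord_max j); rewrite /q' liftK.
Qed.

Lemma generic_grid_through xh eps : 0 < eps ->
  exists m (g : 'I_m -> X) (j0 : 'I_m), generic_grid d u uA eps g /\ g j0 = xh.
Proof.
move=> eps_gt0; have rho_gt0 : 0 < eps / 4 by lra.
have [cs net] := finite_net d_metric d_compact rho_gt0.
have [m [q [j0 [qj0 q_gen q_net]]]] := generic_enumeration xh cs rho_gt0.
exists m, q, j0; split=> //; split.
- by move=> j k qjk; apply: (q_gen None); rewrite qjk.
- exists (eps / 2); split=> [|x]; first lra.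
  have [c [/q_net[j cj] cx]] := net x; exists j.
  by have := d_tri d_metric x c (q j); rewrite (d_sym d_metric x c); lra.
- by move=> p j k /q_gen ->.
Qed.

Variable xstar : X.
Hypothesis xstar_max : in_XAstar uA xstar.

Lemma payoff_bound_manipulable : (0 < n)%N ->
  (forall delta : R, 0 < delta ->
    exists eps0 : R, 0 < eps0 /\
    exists T0 : nat,
      forall (eps : R) (m : nat) (g : 'I_m -> X),
        eps < eps0 -> generic_grid d u uA eps g ->
      forall T : nat, (T0 <= T)%N ->
      forall (x0 : 'I_m) (s : profile m n),
        equilibrium u uA g T x0 s ->
        uA xstar - delta <= setter_payoff uA g T x0 s) ->
  manipulable u uA.
Proof.
move=> n_gt0 bound x x_not_max; apply: NNPP => x_unimprovable.
have x_lt : uA x < uA xstar.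
  rewrite ltNge; apply/negP => x_ge; apply: x_not_max => y.
  exact: le_trans (xstar_max y) x_ge.
have [|eps0 [eps0_gt0 [T0 payoff]]] := bound ((uA xstar - uA x) / 2); first lra.
have [|m [g [j0 [g_grid gj0]]]] := generic_grid_through x (eps := eps0 / 2); first lra.
have g_inj := generic_grid_util_inj g_grid.
have s_eq := sincere_profile_equilibrium u uA g T0 j0 n_gt0.
have := payoff (eps0 / 2) m g _ g_grid T0 (leqnn T0) j0 _ s_eq.
rewrite (equilibrium_payoff g_inj s_eq) outcome_unimprovable ?gj0 //; lra.
Qed.

End GenericGrid.

Unset Implicit Arguments.

Theorem theorem2 (X : Type) (d : X -> X -> R) (n : nat)
    (u : 'I_n -> X -> R) (uA : X -> R) (xstar : X) :
  is_metric d -> dcompact d -> odd n ->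
  (forall i, dcontinuous d (u i)) -> dcontinuous d uA ->
  (* xstar ∈ X_A^*, so u_A^* = uA xstar *)
  in_XAstar uA xstar ->
  thin_indifference d u uA ->
  ((forall delta : R, 0 < delta ->
      exists eps0 : R, 0 < eps0 /\
      exists T0 : nat,
        forall (eps : R) (m : nat) (g : 'I_m -> X),
          eps < eps0 -> generic_grid d u uA eps g ->
        forall T : nat, (T0 <= T)%N ->
        forall (x0 : 'I_m) (s : profile m n),
          equilibrium u uA g T x0 s ->
          uA xstar - delta <= setter_payoff uA g T x0 s)
   <-> manipulable u uA).
Proof.
move=> d_metric d_compact odd_n u_cont uA_cont xstar_max thin.
have n_gt0 : (0 < n)%N by rewrite lt0n; apply: contraTneq odd_n => ->.
split; first exact: payoff_bound_manipulable.
exact: manipulable_payoff_bound.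
Qed.
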